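(* Let $\beta\in(0,1)$, $c>1-\beta$ and $\delta\in[0,1)$, and set $$E_N=\Big\{\sum_{i=\lceil N^\delta\rceil}^{N} w_i^\beta\le c^{-1}N^{1-\beta}\Big\}.$$ Then for every $\eta>0$, $\mathbb P(E_N)=o(N^{-\eta})$ as $N\to\infty$.
   Context: $\Xi$ is a Poisson point process on $(0,\infty)$ with intensity measure $x^{-2}dx$, and $w_1>w_2>\cdots$ are its atoms listed in decreasing order. *)

From HB Require Import structures.
From mathcomp Require Import all_boot all_order all_algebra.
From mathcomp Require Import all_classical all_reals all_analysis.
Set Implicit Arguments. Unset Strict Implicit. Unset Printing Implicit Defensive.
Import Order.TTheory GRing.Theory Num.Theory Num.Def.
Import numFieldNormedType.Exports.
Local Open Scope classical_set_scope.
Local Open Scope ring_scope.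

(* Poisson probability mass function with mean m >= 0
   (the convention 0^0 = 1 gives the Dirac mass at 0 when m = 0). *)
Definition pois_pmf {R : realType} (m : R) (n : nat) : R :=
  expR (- m) * m ^+ n / n`!%:R.

Definition intensity {R : realType} (A : set R) : \bar R :=
  (\int[@lebesgue_measure R]_(x in A `&` [set x : R | (0 < x)%R]) ((x ^-2)%R)%:E)%E.

Definition npoints {R : realType} (w : nat -> R) (A : set R) : \bar R :=
  (\sum_(0 <= i <oo) ((\1_A (w i))%R)%:E)%E.

(* The random sequence w (w i : T -> R) enumerates, in strictly decreasing
   order, the atoms of a Poisson point process on (0,oo) with intensity
   measure x^{-2} dx: each w i is a positive random variable, the sequence is
   strictly decreasing, and the counting process A |-> #{i | w i in A} is a
   Poisson point process with that intensity: for pairwise disjoint Borel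
   sets A_0..A_{k-1} in (0,oo) of finite intensity, the counts are
   independent Poisson variables with means intensity(A_j). *)
Definition ppp_atoms_decreasing {d} {T : measurableType d} {R : realType}
    (P : probability T R) (w : nat -> T -> R) : Prop :=
  [/\ (forall i, measurable_fun setT (w i)),
      (forall i t, 0 < w i t),
      (forall i t, w i.+1 t < w i t) &
      (forall (k : nat) (A : 'I_k -> set R),
         (forall j, measurable (A j)) ->
         (forall j, A j `<=` [set x : R | (0 < x)%R]) ->
         (forall j j', j != j' -> A j `&` A j' = set0) ->
         (forall j, (intensity (A j) < +oo)%E) ->
         forall n : 'I_k -> nat,
           P [set t | forall j, npoints (w ^~ t) (A j) = (n j)%:R%:E]
           = (\prod_(j < k) pois_pmf (fine (intensity (A j))) (n j))%:E)].

(* paper indexing: w_1 > w_2 > ... is  atom w 1, atom w 2, ... *)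
Definition atom {T R : Type} (w : nat -> T -> R) (i : nat) : T -> R := w i.-1.

Definition event_E {T : Type} {R : realType} (w : nat -> T -> R)
    (beta c delta : R) (N : nat) : set T :=
  [set t | \sum_(`|ceil ((N%:R : R) `^ delta)|%N <= i < N.+1)
              (atom w i t) `^ beta
           <= c^-1 * (N%:R : R) `^ (1 - beta)].

From HB Require Import structures.
From mathcomp Require Import all_boot all_order all_algebra.
From mathcomp Require Import all_classical all_reals all_analysis.
From mathcomp Require Import ring lra measurable_realfun.
Import Order.TTheory GRing.Theory Num.Theory Num.Def.
Import numFieldNormedType.Exports.
Local Open Scope classical_set_scope.
Local Open Scope ring_scope.

(* The atoms satisfy w_k ~ 1/k.  Fix eps > 0 with al (1-beta) < c,
   where al = (1 + eps)^2 + eps.  The event {w_k < 1/(al k)} forces the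
   interval [1/(al k), 1/(eps k)], of intensity (1 + eps)^2 k, to hold fewer
   than k atoms, which by a Chernoff bound has probability <= exp(-eps^2 k).
   Off the union of these events over L <= k <= N, where L = ceil(N^gam)
   and gam = (1 + delta)/2, one has w_k >= 1/(al k); concavity of
   t |-> t^(1-beta) then gives
     sum_(L <= i <= N) w_i^beta >= al^-1 ((N+1)^(1-beta) - L^(1-beta))/(1-beta),
   which exceeds c^-1 N^(1-beta) for N large.  Hence
   P(E_N) <= N exp(-eps^2 N^gam), and this stretched exponential is o(N^-eta). *)

Section RealFacts.
Context {R : realType}.

(* The intensity of a compact interval [x, y] of (0, oo) is x^-1 - y^-1:
   t |-> - t^-1 is a primitive of t^-2 on (0, oo). *)
Lemma intensity_itv (x y : R) : 0 < x -> x < y ->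
  intensity [set` `[x, y]] = (x^-1 - y^-1)%:E.
Proof.
move=> x0 xy; rewrite /intensity.
have -> : [set` `[x, y]] `&` [set t : R | 0 < t] = [set` `[x, y]].
  apply/seteqP; split=> t /=; first by case.
  move=> xty; split=> //; move: xty; rewrite in_itv /= => /andP[+ _].
  exact: lt_le_trans.
have derF t : 0 < t -> derivable (fun t : R => - t^-1) t 1.
  by move=> t0; apply/derivableN/derivableV => //; rewrite gt_eqF.
have contf : {within `[x, y], continuous (fun t : R => t ^- 2)}.
  apply/continuous_in_subspaceT => t; rewrite inE /= in_itv /= => /andP[xt _].
  apply: (@continuousV _ _ (fun t : R => t ^+ 2)); last exact: exprn_continuous.
  by rewrite expf_neq0 // gt_eqF // (lt_le_trans x0).
have F'f : {in `]x, y[, (fun t : R => - t^-1)^`()%classic =1 (fun t => t ^- 2)}.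
  move=> t; rewrite in_itv /= => /andP[xt _].
  have t0 : t != 0 by rewrite gt_eqF // (lt_trans x0).
  rewrite derive1E deriveN; last exact: derivableV.
  by rewrite deriveV // derive_id scaler1 opprK.
have Fc : derivable_oo_LRcontinuous (fun t : R => - t^-1) x y.
  split.
  - by move=> t; rewrite in_itv /= => /andP[xt _]; apply: derF; exact: lt_trans xt.
  - apply: cvg_at_right_filter.
    by have /derivable1_diffP/differentiable_continuous := derF x x0.
  - apply: cvg_at_left_filter.
    by have /derivable1_diffP/differentiable_continuous := derF y (lt_trans x0 xy).
by rewrite (continuous_FTC2 xy contf Fc F'f) /= opprK addrC.
Qed.

Lemma exp_partial_sum_le (z : R) (m : nat) : 0 <= z ->
  \sum_(n < m) z ^+ n / n`!%:R <= expR z.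
Proof.
move=> z0.
have nd : nondecreasing_seq (series (exp_coeff z)).
  rewrite seriesEnat; apply: (@nondecreasing_series R _ xpredT 0) => n _ _.
  by rewrite /exp_coeff /= divr_ge0 // exprn_ge0.
have le_lim := nondecreasing_cvgn_le nd (is_cvg_series_exp_coeff z) m.
by apply: (le_trans _ (le_trans le_lim (lexx _))); rewrite seriesEord.
Qed.

(* It is
   obtained by comparing lam^n/n! with (1 + eps)^(m - n) lam^n/n! for n < m. *)
Lemma pois_lower_tail {lam eps : R} (m : nat) : 0 <= lam -> 0 < eps ->
  \sum_(n < m) pois_pmf lam n <= expR (eps * m%:R - eps * lam / (1 + eps)).
Proof.
move=> lam0 eps0.
have e1 : 0 < 1 + eps by rewrite addr_gt0.
set th := (1 + eps)^-1.
have th0 : 0 <= th by rewrite invr_ge0 ltW.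
have tilted : \sum_(n < m) lam ^+ n / n`!%:R <= (1 + eps) ^+ m * expR (lam * th).
  apply: (le_trans _ (ler_wpM2l (exprn_ge0 _ (ltW e1))
    (exp_partial_sum_le (lam * th) m (mulr_ge0 lam0 th0)))).
  rewrite mulr_sumr; apply: ler_sum => n _.
  have -> : lam ^+ n = (1 + eps) ^+ n * (lam * th) ^+ n.
    by rewrite -exprMn mulrCA /th mulfV ?gt_eqF // mulr1.
  rewrite -mulrA; apply: ler_wpM2r; first by rewrite divr_ge0 // exprn_ge0 // mulr_ge0.
  by apply: ler_weXn2l; [rewrite lerDl ltW | exact: ltnW (ltn_ord n)].
have powm : (1 + eps) ^+ m <= expR (eps * m%:R).
  rewrite expRM_natr; apply: lerXn2r; last exact: expR_ge1Dx.
    by rewrite nnegrE ltW.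
  by rewrite nnegrE expR_ge0.
rewrite /pois_pmf; under eq_bigr do rewrite -mulrA; rewrite -mulr_sumr.
apply: le_trans (ler_wpM2l (expR_ge0 _) tilted) _.
apply: le_trans (ler_wpM2l (expR_ge0 _) (ler_wpM2r (expR_ge0 _) powm)) _.
rewrite -!expRD le_eqVlt; apply/orP; left; apply/eqP; congr expR.
by rewrite /th; field; rewrite gt_eqF.
Qed.

Lemma sum_indicator_nat (A : set R) (f : nat -> R) (k : nat) :
  exists2 n : nat, (n <= k)%N &
    (\sum_(0 <= j < k) ((\1_A (f j) : R))%:E = n%:R%:E)%E.
Proof.
elim: k => [|k [n nk IH]]; first by exists 0%N; rewrite // big_geq.
rewrite big_nat_recr //= IH indicE; exists (n + (f k \in A))%N.
  by case: (f k \in A); rewrite ?addn1 ?addn0 ?ltnS // (leq_trans nk).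
by rewrite -EFinD natrD.
Qed.

Lemma npoints_lt_index {A : set R} {v : nat -> R} {x : R} {k : nat} :
  (forall i, v i.+1 < v i) -> A `<=` [set u | x <= u] -> v k < x ->
  exists2 n : nat, (n <= k)%N & npoints v A = n%:R%:E.
Proof.
move=> vdec Ax vk.
have vle j : (k <= j)%N -> v j <= v k.
  move=> /subnK <-; elim: (j - k)%N => [|i IH]; first by rewrite add0n.
  by rewrite addSn (le_trans _ IH) // ltW.
have [n nk Hn] := sum_indicator_nat A v k.
exists n => //; rewrite /npoints -Hn.
apply: lim_near_cst => //; near=> m.
have km : (k <= m)%N by near: m; exists k.
rewrite (@big_cat_nat _ _ _ k 0 m) /= ?leq0n // [X in (_ + X)%E]big_nat_cond.
rewrite [X in (_ + X)%E]big1 ?adde0 // => j /andP[/andP[kj _] _].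
rewrite indicE; suff /negbTE -> : v j \notin A by [].
apply/negP; rewrite inE => /Ax /=; apply/negP; rewrite -ltNge.
exact: le_lt_trans (vle j kj) vk.
Unshelve. all: by end_near.
Qed.

(* Concavity of t |-> t^s for 0 < s < 1, in the form of a tangent bound:
   (u + 1)^s <= u^s + s u^(s-1).  It follows from Young's inequality
   a b <= a^p/p + b^q/q applied with p = 1/s, q = 1/(1-s). *)
Lemma powR_succ_le {u s : R} : 0 < u -> 0 < s < 1 ->
  (u + 1) `^ s <= u `^ s + s * u `^ (s - 1).
Proof.
move=> u0 /andP[s0 s1].
have u1 : 0 < u + 1 by rewrite addr_gt0.
have si : 0 < s^-1 by rewrite invr_gt0.
have si' : 0 < (1 - s)^-1 by rewrite invr_gt0 subr_gt0.
have young := @conjugate_powR R (((u + 1) / u) `^ s) 1 s^-1 (1 - s)^-1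
  (powR_ge0 _ _) ler01 si si'.
have := young (etrans (congr2 _ (invrK s) (invrK (1 - s))) (subrKC s 1)).
have root : (((u + 1) / u) `^ s) `^ s^-1 = (u + 1) / u.
  by rewrite -powRrM mulfV ?gt_eqF // powRr1 // divr_ge0 // ltW.
rewrite mulr1 root powR1 !invrK mul1r => Hy.
have -> : (u + 1) `^ s = ((u + 1) / u) `^ s * u `^ s.
  by rewrite -powRM ?divr_ge0 ?(ltW u0) ?(ltW u1) // divfK ?gt_eqF.
have -> : u `^ (s - 1) = u `^ s / u.
  rewrite powRB; last by apply/implyP => _; rewrite gt_eqF.
  by rewrite powRr1 // ltW.
apply: le_trans (ler_wpM2r (powR_ge0 _ _) Hy) _.
by rewrite le_eqVlt; apply/orP; left; apply/eqP; field; rewrite gt_eqF.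
Qed.

Lemma powR_telescope_le {L N : nat} {s : R} : (0 < L)%N -> (L <= N.+1)%N ->
  0 < s < 1 ->
  N.+1%:R `^ s - L%:R `^ s <= s * \sum_(L <= i < N.+1) i%:R `^ (s - 1).
Proof.
move=> L0 LN s01.
rewrite -(telescope_sumr (fun i => i%:R `^ s) LN) mulr_sumr.
apply: ler_sum_nat => i /andP[Li _].
rewrite lerBlDl -natr1; apply: powR_succ_le s01.
by rewrite ltr0n (leq_trans L0).
Qed.

Lemma powR_inv (a x : R) : 0 < a -> a^-1 `^ x = a `^ (- x).
Proof.
by move=> a0; rewrite /powR !gt_eqF ?invr_gt0 // lnV ?posrE // mulrN mulNr.
Qed.

Lemma sum_powR_ge {beta al : R} {L N : nat} {v : nat -> R} :
  0 < beta < 1 -> 1 <= al -> (0 < L)%N -> (L <= N.+1)%N ->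
  (forall i, (L <= i <= N)%N -> al^-1 / i%:R <= v i) ->
  al^-1 / (1 - beta) * (N.+1%:R `^ (1 - beta) - L%:R `^ (1 - beta))
    <= \sum_(L <= i < N.+1) v i `^ beta.
Proof.
move=> /andP[b0 b1] al1 L0 LN hv.
have s0 : 0 < 1 - beta by rewrite subr_gt0.
have al0 : 0 < al by apply: lt_le_trans al1.
have s01 : 0 < 1 - beta < 1 by rewrite s0 ltrBlDr ltrDl.
apply: le_trans (_ : al^-1 / (1 - beta) *
    ((1 - beta) * \sum_(L <= i < N.+1) i%:R `^ (- beta)) <= _).
  apply: ler_wpM2l; first by rewrite divr_ge0 ?invr_ge0 ?(ltW al0) ?(ltW s0).
  by have := powR_telescope_le L0 LN s01; rewrite addrAC subrr add0r.
rewrite mulrA divfK ?gt_eqF // mulr_sumr; apply: ler_sum_nat => i iLN.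
have i0 : 0 < i%:R :> R by rewrite ltr0n (leq_trans L0); case/andP: iLN.
have vi : al^-1 / i%:R <= v i by apply: hv; rewrite -ltnS.
have ai0 : 0 <= al^-1 / i%:R by rewrite divr_ge0 ?invr_ge0 ?(ltW al0) ?(ltW i0).
have powvi : (al^-1 / i%:R) `^ beta <= v i `^ beta.
  by apply: ge0_ler_powR; rewrite ?nnegrE ?(ltW b0) // (le_trans ai0).
apply: le_trans _ powvi.
rewrite powRM ?invr_ge0 ?(ltW al0) ?(ltW i0) // [i%:R^-1 `^ _]powR_inv //.
apply: ler_wpM2r; first exact: powR_ge0.
by apply: ger1_powR; [rewrite invr_gt0 al0 invf_le1 | exact: ltW].
Qed.

Lemma ceilnP {x : R} : 0 <= x ->
  x <= (`|ceil x|%N)%:R /\ (`|ceil x|%N)%:R < x + 1.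
Proof.
move=> x0; rewrite natr_absz ger0_norm; last first.
  by rewrite ceil_ge0 (lt_le_trans _ x0) // ltrN10.
have /andP[h1 h2] := ceil_itv x; split => //.
by rewrite -ltrBlDr -[1]/(1%:~R) -intrB.
Qed.

Lemma ceiln_le {x y : R} : 0 <= x -> x <= y -> (`|ceil x| <= `|ceil y|)%N.
Proof.
move=> x0 xy; rewrite -(ler_nat R) !natr_absz !ger0_norm.
- by rewrite ler_int le_ceil.
- by rewrite ceil_ge0 (lt_le_trans _ (le_trans x0 xy)) // ltrN10.
- by rewrite ceil_ge0 (lt_le_trans _ x0) // ltrN10.
Qed.

Lemma ceil_pow_bounds {N : nat} {delta gam : R} : (0 < N)%N ->
  0 <= delta -> delta <= gam -> gam <= 1 ->
  [/\ (0 < `|ceil ((N%:R : R) `^ gam)|)%N,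
      (`|ceil ((N%:R : R) `^ delta)| <= `|ceil ((N%:R : R) `^ gam)|)%N &
      (`|ceil ((N%:R : R) `^ gam)| <= N)%N].
Proof.
move=> N0 d0 dg g1.
have N1 : 1 <= (N%:R : R) by rewrite ler1n.
have x1 : 1 <= (N%:R : R) `^ gam.
  by rewrite -[X in X <= _](powRr0 N%:R) ler_powR // (le_trans d0).
have [Lx Lx1] := ceilnP (le_trans ler01 x1).
split.
- by rewrite -(ltr0n R) (lt_le_trans ltr01 (le_trans x1 Lx)).
- by apply: ceiln_le; [exact: powR_ge0 | rewrite ler_powR].
- rewrite -ltnS -(ltr_nat R) (lt_le_trans Lx1) // -natr1 lerD2r.
  by rewrite -{2}(powRr1 (ler0n _ N)) ler_powR.
Qed.

(* For 0 < s <= 1, 0 <= gam < 1 and kap > 0, ceil(N^gam)^s is eventually below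
   kap N^s: indeed ceil(N^gam)^s <= 2 N^(gam s) while
   N^s = N^(gam s) N^((1 - gam) s). *)
Lemma ceil_pow_negligible {s gam kap : R} : 0 < s <= 1 -> 0 <= gam < 1 -> 0 < kap ->
  \forall N \near \oo,
    (`|ceil ((N%:R : R) `^ gam)|%N)%:R `^ s < kap * (N%:R : R) `^ s.
Proof.
move=> /andP[s0 s1] /andP[g0 g1] kap0.
set r := (1 - gam) * s.
have r0 : 0 < r by rewrite mulr_gt0 // subr_gt0.
near=> N.
have N1 : 1 <= (N%:R : R) by rewrite ler1n; near: N; exact: nbhs_infty_gt.
have NM : (3 / kap) `^ r^-1 <= N%:R by near: N; exact: nbhs_infty_ger.
set n := (N%:R : R) in N1 NM *.
have n0 : 0 < n by apply: lt_le_trans N1.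
have x1 : 1 <= n `^ gam by rewrite -[X in X <= _](powRr0 n) ler_powR.
have [_ Lx1] := ceilnP (le_trans ler01 x1).
set A := n `^ (gam * s).
have A0 : 0 < A by rewrite powR_gt0.
have LA : (`|ceil (n `^ gam)|%N)%:R `^ s <= 2 * A.
  apply: le_trans (_ : (2 * n `^ gam) `^ s <= _).
    apply: ge0_ler_powR; rewrite ?nnegrE ?(ltW s0) ?mulr_ge0 ?powR_ge0 //.
    by rewrite mulr2n mulrDl mul1r (le_trans (ltW Lx1)) // lerD2l.
  rewrite powRM ?powR_ge0 // /A powRrM; apply: ler_wpM2r; first exact: powR_ge0.
  by apply: ler1_powR; rewrite ?ler1n.
have Nr : 3 <= kap * n `^ r.
  rewrite -ler_pdivrMl // mulrC.
  apply: le_trans (_ : ((3 / kap) `^ r^-1) `^ r <= _).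
    by rewrite -powRrM mulVf ?gt_eqF // powRr1 // divr_ge0 // ltW.
  by apply: ge0_ler_powR; rewrite ?nnegrE ?powR_ge0 ?(ltW r0) ?(ltW n0).
have -> : n `^ s = A * n `^ r.
  have splits : s = gam * s + r by rewrite /r; ring.
  by rewrite {1}splits powRD //; apply/implyP => _; rewrite gt_eqF.
by apply: le_lt_trans LA _; nra.
Unshelve. all: by end_near.
Qed.

Lemma expRN_le_fact {z : R} (K : nat) : 0 < z -> expR (- z) <= K`!%:R / z ^+ K.
Proof.
move=> z0; rewrite expRN.
case: K => [|K].
  rewrite fact0 expr0 divr1 invf_le1 ?expR_gt0 //.
  by rewrite (le_trans _ (expR_ge1Dx z)) // lerDl ltW.
have zK0 : 0 < z ^+ K.+1 / K.+1`!%:R by rewrite divr_gt0 ?exprn_gt0 ?ltr0n ?fact_gt0.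
rewrite -invf_div lef_pV2 ?posrE ?expR_gt0 //.
by apply: le_trans (expR_ge1Dxn K (ltW z0)); rewrite lerDr.
Qed.

Lemma stretched_exp_littleo {kap gam eta e : R} :
  0 < kap -> 0 < gam -> 0 < eta -> 0 < e ->
  \forall N \near \oo,
    (N%:R : R) * expR (- (kap * (N%:R : R) `^ gam)) <= e * `|(N%:R : R) `^ (- eta)|.
Proof.
move=> kap0 g0 eta0 e0.
set K := `|ceil ((eta + 2) / gam)|%N.
have [pK _] := ceilnP (divr_ge0 (addr_ge0 (ltW eta0) (ler0n R 2)) (ltW g0)).
set C := K`!%:R / kap ^+ K.
have C0 : 0 < C by rewrite divr_gt0 ?ltr0n ?fact_gt0 // exprn_gt0.
near=> N.
have N1 : 1 <= (N%:R : R) by rewrite ler1n; near: N; exact: nbhs_infty_gt.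
have NC : C / e <= N%:R by near: N; exact: nbhs_infty_ger.
set n := (N%:R : R) in N1 NC *.
have n0 : 0 < n by apply: lt_le_trans N1.
(* (kap n^gam)^K >= kap^K n^(eta + 2) because gam K >= eta + 2 *)
have zK : kap ^+ K * n `^ (eta + 2) <= (kap * n `^ gam) ^+ K.
  rewrite exprMn ler_wpM2l ?exprn_ge0 ?(ltW kap0) //.
  rewrite -powR_mulrn ?powR_ge0 // -powRrM ler_powR //.
  by rewrite -ler_pdivrMl // mulrC.
have ez : expR (- (kap * n `^ gam)) <= C / n `^ (eta + 2).
  apply: le_trans (expRN_le_fact K (mulr_gt0 kap0 (powR_gt0 _ n0))) _.
  rewrite /C -mulrA ler_wpM2l ?ler0n // -invfM lef_pV2 ?posrE.
  - exact: zK.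
  - by rewrite exprn_gt0 // mulr_gt0 // powR_gt0.
  - by rewrite mulr_gt0 ?exprn_gt0 ?powR_gt0.
rewrite ger0_norm ?powR_ge0 // powRN.
apply: le_trans (ler_wpM2l (ltW n0) ez) _.
have -> : n * (C / n `^ (eta + 2)) = C / n * (n `^ eta)^-1.
  have pow2 : n `^ (eta + 2) = n `^ eta * n ^+ 2.
    rewrite powRD; last by apply/implyP => _; rewrite gt_eqF.
    by rewrite powR_mulrn // ltW.
  by rewrite pow2; field; rewrite !gt_eqF ?powR_gt0.
rewrite ler_wpM2r ?invr_ge0 ?powR_ge0 //.
by rewrite ler_pdivrMr // mulrC -ler_pdivrMr.
Unshelve. all: by end_near.
Qed.

End RealFacts.

Section PoissonAtoms.
Context {d : measure_display} {T : measurableType d} {R : realType}.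

Lemma npoints_measurable {w : nat -> T -> R} {A : set R} :
  (forall i, measurable_fun setT (w i)) -> measurable A ->
  measurable_fun setT (fun t => npoints (w ^~ t) A).
Proof.
move=> mw mA; apply: ge0_emeasurable_sum => [k t _ _|k _].
  by rewrite lee_fin indicE ler0n.
by apply/measurable_EFinP; exact: measurableT_comp.
Qed.

Lemma event_E_measurable {w : nat -> T -> R} (beta c delta : R) (N : nat) :
  (forall i, measurable_fun setT (w i)) -> measurable (event_E w beta c delta N).
Proof.
move=> mw; rewrite /event_E.
set r := c^-1 * _; set a := `|ceil _|%N.
have msum : measurable_fun setT
    (fun t => \sum_(i <- index_iota a N.+1) atom w i t `^ beta).
  by apply: measurable_sum => i; exact: measurableT_comp (measurable_powR beta) (mw i.-1).
rewrite -[X in measurable X]setTI; exact: msum measurableT _ (measurable_itv `]-oo, r]).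
Qed.

(* An atom below x:  w_k < x forces [x, y] to contain at most k atoms, so
   P(w_k < x) is at most P(Poisson(x^-1 - y^-1) <= k). *)
Lemma prob_atom_below {P : probability T R} {w : nat -> T -> R} {x y : R} (k : nat) :
  ppp_atoms_decreasing P w -> 0 < x -> x < y ->
  (P [set t | (w k t < x)%R] <= (\sum_(n < k.+1) pois_pmf (x^-1 - y^-1) n)%:E)%E.
Proof.
move=> [mw _ wdec hP] x0 xy.
set A := [set` `[x, y]].
have mA : measurable A by exact: measurable_itv.
have Apos : A `<=` [set u | 0 < u].
  by move=> u; rewrite /A /= in_itv /= => /andP[+ _]; exact: lt_le_trans.
have IA : intensity A = (x^-1 - y^-1)%:E by exact: intensity_itv.
pose C (n : nat) := [set t | forall j : 'I_1, npoints (w ^~ t) A = n%:R%:E].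
have PC n : P (C n) = (pois_pmf (x^-1 - y^-1) n)%:E.
  have := hP 1%N (fun=> A) (fun=> mA) (fun=> Apos) _ _ (fun=> n).
  rewrite big_ord1 IA; apply => [j j'|_]; first by rewrite !ord1.
  exact: ltry.
have mC n : measurable (C n).
  have -> : C n = setT `&` (fun t => npoints (w ^~ t) A) @^-1` [set n%:R%:E].
    by apply/seteqP; split => t /=; [move=> /(_ ord0) | move=> [_ Ht] j].
  exact: npoints_measurable.
have mB : measurable [set t | (w k t < x)%R].
  rewrite -[X in measurable X]setTI.
  exact: (mw k) measurableT _ (measurable_itv `]-oo, x[).
have sub : [set t | (w k t < x)%R] `<=` \big[setU/set0]_(n < k.+1) C n.
  move=> t /= wkt.
  have Ax : A `<=` [set u | x <= u] by move=> u; rewrite /A /= in_itv /= => /andP[].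
  have [n nk Hn] := npoints_lt_index (wdec ^~ t) Ax wkt.
  by rewrite -bigcup_mkord; exists n.
apply: le_trans (@content_subadditive _ _ _ P _ C k.+1 (fun n _ => mC n) mB sub) _.
rewrite (eq_bigr (fun n : 'I_k.+1 => (pois_pmf (x^-1 - y^-1) n)%:E)) ?sumEFin //.
by move=> n _; exact: PC.
Qed.

(* With al = (1 + eps)^2 + eps, the atom w_k (the (k+1)-th largest) falls
   below 1/(al (k+1)) with probability at most exp(-eps^2 (k+1)): take
   [x, y] = [1/(al (k+1)), 1/(eps (k+1))], of intensity (1 + eps)^2 (k+1),
   and apply the Chernoff bound. *)
Lemma prob_atom_small {P : probability T R} {w : nat -> T -> R} {eps : R} (k : nat) :
  ppp_atoms_decreasing P w -> 0 < eps ->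
  (P [set t | (w k t < ((1 + eps) ^+ 2 + eps)^-1 / k.+1%:R)%R]
    <= (expR (- (eps ^+ 2 * k.+1%:R)))%:E)%E.
Proof.
move=> Hw e0.
set al := (1 + eps) ^+ 2 + eps.
have al0 : 0 < al by rewrite addr_gt0 // exprn_gt0 // addr_gt0.
have k0 : 0 < k.+1%:R :> R by rewrite ltr0n.
set x := al^-1 / k.+1%:R; set y := eps^-1 / k.+1%:R.
have x0 : 0 < x by rewrite divr_gt0 // invr_gt0.
have xy : x < y.
  by rewrite ltr_pM2r ?invr_gt0 // ltf_pV2 ?posrE // ltrDr exprn_gt0 // addr_gt0.
have lamE : x^-1 - y^-1 = (1 + eps) ^+ 2 * k.+1%:R.
  by rewrite /x /y !invfM !invrK /al; ring.
apply: le_trans (prob_atom_below k Hw x0 xy) _.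
rewrite lee_fin lamE; apply: le_trans (pois_lower_tail _ _ e0) _.
  by rewrite mulr_ge0 // exprn_ge0 // ltW // addr_gt0.
rewrite le_eqVlt; apply/orP; left; apply/eqP; congr expR.
by field; rewrite gt_eqF // addr_gt0.
Qed.

(* Union bound: if the deterministic lower bound of sum_powR_ge, evaluated at
   some L <= N with ceil(N^delta) <= L, exceeds c^-1 N^(1-beta), then E_N
   requires one of the atoms w_L, ..., w_N (paper indexing) to be small, so
   P(E_N) <= N exp(-eps^2 L). *)
Lemma prob_event_E_le {P : probability T R} {w : nat -> T -> R}
    {beta c delta eps : R} {N L : nat} :
  ppp_atoms_decreasing P w -> 0 < eps -> 0 < beta < 1 ->
  (0 < L)%N -> (`|ceil ((N%:R : R) `^ delta)| <= L)%N -> (L <= N)%N ->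
  c^-1 * (N%:R : R) `^ (1 - beta) <
    ((1 + eps) ^+ 2 + eps)^-1 / (1 - beta) *
      (N.+1%:R `^ (1 - beta) - L%:R `^ (1 - beta)) ->
  (P (event_E w beta c delta N) <= (N%:R * expR (- (eps ^+ 2 * L%:R)))%:E)%E.
Proof.
move=> Hw e0 b01 L0 aL LN margin.
have [mw _ _ _] := Hw.
set al := (1 + eps) ^+ 2 + eps.
have al1 : 1 <= al.
  have sq1 : 1 <= (1 + eps) ^+ 2 by rewrite expr_ge1 ?addr_ge0 ?(ltW e0) // lerDl ltW.
  by rewrite (le_trans sq1) // lerDl ltW.
pose F k := if (L <= k.+1)%N then [set t | w k t < al^-1 / k.+1%:R] else set0.
have mF k : measurable (F k).
  rewrite /F; case: ifP => // _; rewrite -[X in measurable X]setTI.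
  exact: (mw k) measurableT _ (measurable_itv `]-oo, _[).
have sub : event_E w beta c delta N `<=` \big[setU/set0]_(k < N) F k.
  move=> t Et; apply: contrapT => nU.
  have atom_large i : (L <= i <= N)%N -> al^-1 / i%:R <= atom w i t.
    move=> /andP[Li iN]; rewrite /atom leNgt; apply/negP => wi; apply: nU.
    have i0 : (0 < i)%N by apply: leq_trans Li.
    rewrite -bigcup_mkord; exists i.-1; first by rewrite /= prednK.
    by rewrite /F prednK // Li.
  have lower := sum_powR_ge b01 al1 L0 (leqW LN) atom_large.
  have tail : \sum_(L <= i < N.+1) atom w i t `^ beta
      <= \sum_(`|ceil ((N%:R : R) `^ delta)| <= i < N.+1) atom w i t `^ beta.
    rewrite (@big_cat_nat _ _ _ L _ N.+1 _ _ aL (leqW LN)) /= lerDr.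
    by rewrite sumr_ge0 // => i _; exact: powR_ge0.
  by have := lt_le_trans margin (le_trans lower (le_trans tail Et)); rewrite ltxx.
apply: le_trans (@content_subadditive _ _ _ P _ F N (fun n _ => mF n)
  (event_E_measurable beta c delta N mw) sub) _.
apply: le_trans (_ : (\sum_(k < N) (expR (- (eps ^+ 2 * L%:R)))%:E <= _)%E).
  apply: lee_sum => k _; rewrite /F; case: ifP => Lk; last first.
    by rewrite measure0 lee_fin expR_ge0.
  apply: le_trans (prob_atom_small k Hw e0) _.
  by rewrite lee_fin ler_expR lerN2 ler_wpM2l ?exprn_ge0 ?ler_nat // ltW.
by rewrite sumEFin sumr_const card_ord mulr_natl.
Qed.

Lemma prob_event_E_eventually {P : probability T R} {w : nat -> T -> R}
    {beta c delta gam eps : R} :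
  ppp_atoms_decreasing P w -> 0 < beta < 1 -> 0 <= delta -> delta <= gam ->
  gam < 1 -> 0 < eps -> ((1 + eps) ^+ 2 + eps) * (1 - beta) < c ->
  \forall N \near \oo,
    (P (event_E w beta c delta N)
      <= ((N%:R : R) * expR (- (eps ^+ 2 * (N%:R : R) `^ gam)))%:E)%E.
Proof.
move=> Hw b01 d0 dg g1 e0 small_al; have [b0 b1] := andP b01.
set s := 1 - beta; set al := (1 + eps) ^+ 2 + eps.
have s0 : 0 < s by rewrite subr_gt0.
have al0 : 0 < al by rewrite addr_gt0 // exprn_gt0 // addr_gt0.
have c0 : 0 < c by apply: lt_trans small_al; rewrite mulr_gt0.
set kap := 1 - al * s / c.
have kap0 : 0 < kap by rewrite subr_gt0 ltr_pdivrMr // mul1r.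
have g0 : 0 <= gam by apply: le_trans dg.
have s01 : 0 < s <= 1 by rewrite s0 lerBlDr lerDl ltW.
have g01 : 0 <= gam < 1 by rewrite g0 g1.
have negligible := ceil_pow_negligible s01 g01 kap0.
near=> N.
have N0 : (0 < N)%N by near: N; exists 1%N.
have Ls : (`|ceil ((N%:R : R) `^ gam)|%N)%:R `^ s < kap * (N%:R : R) `^ s.
  by near: N.
have [L0 aL LN] := ceil_pow_bounds N0 d0 dg (ltW g1).
set L := `|ceil ((N%:R : R) `^ gam)|%N in Ls L0 aL LN *.
have margin : c^-1 * (N%:R : R) `^ s < al^-1 / s * (N.+1%:R `^ s - L%:R `^ s).
  have Ns : (N%:R : R) `^ s <= N.+1%:R `^ s.
    by apply: ge0_ler_powR; rewrite ?nnegrE ?ler_nat ?(ltW s0).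
  have -> : c^-1 * (N%:R : R) `^ s = al^-1 / s * ((1 - kap) * (N%:R : R) `^ s).
    by rewrite /kap; field; rewrite !gt_eqF.
  by rewrite ltr_pM2l ?divr_gt0 ?invr_gt0 // mulrBl mul1r; lra.
apply: le_trans (prob_event_E_le Hw e0 b01 L0 aL LN margin) _.
rewrite lee_fin; apply: ler_wpM2l => //; rewrite ler_expR lerN2.
apply: ler_wpM2l; first by rewrite exprn_ge0 // ltW.
by have [] := ceilnP (powR_ge0 (N%:R : R) gam).
Unshelve. all: by end_near.
Qed.

End PoissonAtoms.

Lemma exists_margin_eps {R : realType} {s c : R} : 0 < s -> s < c ->
  exists2 eps : R, 0 < eps & ((1 + eps) ^+ 2 + eps) * s < c.
Proof.
move=> s0 sc; have c0 : 0 < c by apply: lt_trans sc.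
exists ((c - s) / (4 * c)); first by rewrite divr_gt0 ?subr_gt0 ?mulr_gt0.
set eps := (c - s) / (4 * c).
have e0 : 0 < eps by rewrite divr_gt0 ?subr_gt0 ?mulr_gt0.
have epsc : 4 * eps * c = c - s by rewrite /eps; field; rewrite gt_eqF.
have e1 : eps < 1 by nra.
nra.
Qed.

Theorem lemma4p2 (d : measure_display) (T : measurableType d) (R : realType)
    (P : probability T R) (w : nat -> T -> R)
    (beta c delta : R) :
  ppp_atoms_decreasing P w ->
  0 < beta < 1 -> 1 - beta < c -> 0 <= delta < 1 ->
  forall eta : R, 0 < eta ->
    (fun N : nat => fine (P (event_E w beta c delta N)))
      =o_\oo (fun N : nat => (N%:R : R) `^ (- eta)).
Proof.
move=> Hw b01 hc /andP[d0 d1] eta eta0.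
have s0 : 0 < 1 - beta by rewrite subr_gt0; case/andP: b01.
have [eps e0 small_al] := exists_margin_eps s0 hc.
set gam := (1 + delta) / 2.
have dg : delta <= gam by rewrite /gam; lra.
have g1 : gam < 1 by rewrite /gam; lra.
have g0 : 0 < gam by rewrite /gam; lra.
apply/eqoP => e e_gt0.
have bound := prob_event_E_eventually Hw b01 d0 dg g1 e0 small_al.
have decay := stretched_exp_littleo (exprn_gt0 2 e0) g0 eta0 e_gt0.
near=> N.
have PE : (P (event_E w beta c delta N)
    <= ((N%:R : R) * expR (- (eps ^+ 2 * (N%:R : R) `^ gam)))%:E)%E by near: N.
have PEfin : P (event_E w beta c delta N) \is a fin_num.
  by rewrite ge0_fin_numE ?measure_ge0 // (le_lt_trans PE) ?ltry.
rewrite ger0_norm ?fine_ge0 ?measure_ge0 //.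
apply: le_trans (_ : _ <= (N%:R : R) * expR (- (eps ^+ 2 * (N%:R : R) `^ gam))) _.
  by rewrite -lee_fin fineK.
by near: N.
Unshelve. all: by end_near.
Qed.
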